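(* For integers $m\neq 0$ and $n$, define \[ \mathcal{I}_1^{(m,n)}=\frac{1}{|m|}\sup_{0\le s\le |m|}\int_0^s K_{n+1}(s)I_n(t)\,t\,dt,\qquad \mathcal{I}_2^{(m,n)}=\frac{1}{|m|}\sup_{0\le t\le |m|}\int_t^{|m|} K_{n+1}(s)I_n(t)\,s\,ds. \] Then there is a constant $C$, independent of $m$ and $n$, such that for $i=1,2$ and all integers $m\neq 0$, $n$, \[ \mathcal{I}_i^{(m,n)}\le\frac{C}{\sqrt{1+m^2+n^2}}. \]
   Context: $I_n,K_n$ are the modified Bessel functions of the first and second kind of integer order $n$: $I_n(t)=\frac1\pi\int_0^\pi e^{t\cos\alpha}\cos(n\alpha)\,d\alpha$, $K_n(t)=\int_0^\infty e^{-t\cosh\alpha}\cosh(n\alpha)\,d\alpha$ for $t>0$. *)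

From Stdlib Require Import Reals ZArith.
From Coquelicot Require Import Coquelicot.
Open Scope R_scope.

Definition besselI (n : Z) (t : R) : R :=
  / PI * RInt (fun a => exp (t * cos a) * cos (IZR n * a)) 0 PI.

Definition besselK (n : Z) (t : R) : R :=
  RInt_gen (fun a => exp (- t * cosh a) * cosh (IZR n * a))
    (at_point 0) (Rbar_locally p_infty).

From Stdlib Require Import Reals ZArith Lra Lia Psatz Classical.
From Coquelicot Require Import Coquelicot.
Open Scope R_scope.

(* Both integrands are controlled by two pointwise bounds, valid for [0 < t <= s]:
     K_(n+1)(s) I_n(t) <= 3 e^(u-s) / u   for [t <= u <= s],
     K_(n+1)(s) I_n(t) <= 3 (t/s)^|n| / s.
   They follow from the monotonicity of [I_n], of [x^-|n| I_n(x)] and of [e^x K_(n+1)(x)], together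
   with [x I_n(x) K_(n+1)(x) <= 3], a weak form of the Wronskian identity
   [x (I_n K_(n+1) + I_(n+1) K_n) = 1].  The first bound makes both integrals [O(1)], the second makes
   them [O(|m| / (|n| + 1))]; dividing by [|m|] gives [21 / sqrt (1 + m^2 + n^2)].
   As [K_n] is an improper integral, the Wronskian bound is proved with [K_n] truncated at [B]: by the
   recurrences of [I_n] and of the truncated [K_n], the derivative of the truncated Wronskian reduces
   to the boundary term [e^(-x cosh B) (I_n(x) sinh((n+1)B) - I_(n+1)(x) sinh(nB))], and integrating it
   with [I_n(x) <= (x/2)^n/n! e^x] bounds the truncated Wronskian by 3 once [B >= ln (2 (n+2))]. *)

Lemma exp_le x y : x <= y -> exp x <= exp y.
Proof. intros [H | ->]; [left; apply exp_increasing | right]; auto. Qed.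

Lemma exp_mult_INR n a : exp (INR n * a) = exp a ^ n.
Proof.
  induction n as [|n IH]; [simpl; rewrite Rmult_0_l; apply exp_0|].
  rewrite S_INR, Rmult_plus_distr_r, Rmult_1_l, exp_plus, IH. simpl. ring.
Qed.

Lemma INR_fact_pos n : 0 < INR (fact n).
Proof. apply lt_0_INR, lt_O_fact. Qed.

Lemma pow_div_fact_le_exp n x : 0 <= x -> x ^ n / INR (fact n) <= exp x.
Proof.
  intros Hx. eapply Rle_trans; [| apply (exp_ge_taylor x n Hx)].
  destruct n as [|n]; [simpl; lra|].
  rewrite tech5.
  assert (0 <= sum_f_R0 (fun k => x ^ k / INR (fact k)) n); [|lra].
  apply cond_pos_sum. intros k. apply Rmult_le_pos; [apply pow_le; lra|].
  left; apply Rinv_0_lt_compat, INR_fact_pos.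
Qed.

Lemma exp_neg_mul_pow_le m x z : 0 < x -> 0 < z ->
  exp (- (x * z / 2)) * z ^ m <= INR (fact m) * (2 / x) ^ m.
Proof.
  intros Hx Hz.
  assert (H := pow_div_fact_le_exp m (x * z / 2) ltac:(nra)).
  assert (HF := INR_fact_pos m).
  assert (Hinv : exp (- (x * z / 2)) * exp (x * z / 2) = 1) by (rewrite <- exp_plus, Rplus_opp_l; apply exp_0).
  assert (Hpow : (x * z / 2) ^ m = (x / 2) ^ m * z ^ m) by (rewrite <- Rpow_mult_distr; f_equal; field).
  assert (Hx2 : (2 / x) ^ m * (x / 2) ^ m = 1)
    by (rewrite <- Rpow_mult_distr; replace (2 / x * (x / 2)) with 1 by (field; lra); apply pow1).
  assert (0 < exp (- (x * z / 2))) by apply exp_pos.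
  assert (0 < (2 / x) ^ m) by (apply pow_lt; apply Rdiv_lt_0_compat; lra).
  apply (Rmult_le_compat_l (INR (fact m) * exp (- (x * z / 2)) * (2 / x) ^ m)) in H; [|apply Rmult_le_pos; nra].
  rewrite Hpow in H.
  replace (INR (fact m) * exp (- (x * z / 2)) * (2 / x) ^ m * ((x / 2) ^ m * z ^ m / INR (fact m)))
    with (exp (- (x * z / 2)) * z ^ m * ((2 / x) ^ m * (x / 2) ^ m)) in H by (field; lra).
  replace (INR (fact m) * exp (- (x * z / 2)) * (2 / x) ^ m * exp (x * z / 2))
    with (INR (fact m) * (2 / x) ^ m * (exp (- (x * z / 2)) * exp (x * z / 2))) in H by ring.
  rewrite Hx2, Hinv, !Rmult_1_r in H. exact H.
Qed.

Lemma one_plus_inv_pow_le_3 n : (1 + / INR (S n)) ^ S n <= 3.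
Proof.
  assert (HS : 0 < INR (S n)) by (apply lt_0_INR; lia).
  apply Rle_trans with (exp (/ INR (S n)) ^ S n).
  - apply pow_incr. split; [assert (0 < / INR (S n)) by (apply Rinv_0_lt_compat; lra); lra|].
    apply exp_ineq1_le.
  - rewrite <- exp_mult_INR, Rinv_r by lra. apply exp_le_3.
Qed.

Lemma cosh_pos z : 0 < cosh z.
Proof. unfold cosh. assert (H1 := exp_pos z). assert (H2 := exp_pos (- z)). lra. Qed.

Lemma sinh_ge0 z : 0 <= z -> 0 <= sinh z.
Proof. intros Hz. unfold sinh. assert (exp (- z) <= exp z) by (apply exp_le; lra). lra. Qed.

Lemma cosh_le p q : 0 <= p -> p <= q -> cosh p <= cosh q.
Proof.
  intros Hp Hpq. unfold cosh. rewrite !exp_Ropp.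
  assert (H1 : exp p <= exp q) by (apply exp_le; lra).
  assert (H2 : 1 <= exp p) by (rewrite <- exp_0; apply exp_le; lra).
  set (A := exp p) in *. set (B := exp q) in *.
  assert (E : (B + / B) / 2 - (A + / A) / 2 = (B - A) * (A * B - 1) / (2 * A * B)) by (field; lra).
  assert (0 <= (B - A) * (A * B - 1) / (2 * A * B)); [|lra].
  assert (1 <= A * B) by nra.
  unfold Rdiv. apply Rmult_le_pos; [apply Rmult_le_pos; lra|]. left; apply Rinv_0_lt_compat; nra.
Qed.

Lemma cosh_Rabs p : cosh (Rabs p) = cosh p.
Proof.
  destruct (Rle_dec 0 p); [rewrite Rabs_right by lra; auto|].
  rewrite Rabs_left by lra. unfold cosh. rewrite Ropp_involutive. field.
Qed.

Lemma cosh_le_Rabs p q : Rabs p <= Rabs q -> cosh p <= cosh q.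
Proof. intros H. rewrite <- (cosh_Rabs p), <- (cosh_Rabs q). apply cosh_le; auto. apply Rabs_pos. Qed.

Lemma one_le_cosh a : 1 <= cosh a.
Proof. rewrite <- cosh_0, <- (cosh_Rabs a). apply cosh_le; [lra | apply Rabs_pos]. Qed.

Lemma cosh_le_exp_Rabs y : cosh y <= exp (Rabs y).
Proof.
  rewrite <- cosh_Rabs. unfold cosh.
  assert (exp (- Rabs y) <= exp (Rabs y)) by (apply exp_le; assert (H := Rabs_pos y); lra). lra.
Qed.

Lemma Rabs_IZR_mul nu a : 0 <= a -> Rabs (IZR nu * a) = INR (Z.abs_nat nu) * a.
Proof.
  intros Ha. rewrite Rabs_mult, (Rabs_right a) by lra.
  rewrite INR_IZR_INZ, Nat2Z.inj_abs_nat, abs_IZR. reflexivity.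
Qed.

Lemma cos_mul_cos_IZR (n : Z) a :
  cos a * cos (IZR n * a) = / 2 * cos (IZR (n - 1) * a) + / 2 * cos (IZR (n + 1) * a).
Proof.
  rewrite minus_IZR, plus_IZR.
  replace ((IZR n - 1) * a) with (IZR n * a - a) by ring.
  replace ((IZR n + 1) * a) with (IZR n * a + a) by ring.
  rewrite cos_minus, cos_plus. field.
Qed.

Lemma sin_mul_sin_IZR (n : Z) a :
  sin a * sin (IZR n * a) = / 2 * cos (IZR (n - 1) * a) - / 2 * cos (IZR (n + 1) * a).
Proof.
  rewrite minus_IZR, plus_IZR.
  replace ((IZR n - 1) * a) with (IZR n * a - a) by ring.
  replace ((IZR n + 1) * a) with (IZR n * a + a) by ring.
  rewrite cos_minus, cos_plus. field.
Qed.

Lemma cosh_mul_cosh_IZR (nu : Z) a :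
  cosh a * cosh (IZR nu * a) = / 2 * cosh (IZR (nu - 1) * a) + / 2 * cosh (IZR (nu + 1) * a).
Proof.
  rewrite plus_IZR, minus_IZR. unfold cosh.
  replace ((IZR nu + 1) * a) with (IZR nu * a + a) by ring.
  replace ((IZR nu - 1) * a) with (IZR nu * a + - a) by ring.
  replace (- (IZR nu * a + a)) with (- (IZR nu * a) + - a) by ring.
  replace (- (IZR nu * a + - a)) with (- (IZR nu * a) + a) by ring.
  rewrite !exp_plus. field.
Qed.

Lemma sinh_mul_sinh_IZR (nu : Z) a :
  sinh a * sinh (IZR nu * a) = / 2 * cosh (IZR (nu + 1) * a) - / 2 * cosh (IZR (nu - 1) * a).
Proof.
  rewrite plus_IZR, minus_IZR. unfold cosh, sinh.
  replace ((IZR nu + 1) * a) with (IZR nu * a + a) by ring.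
  replace ((IZR nu - 1) * a) with (IZR nu * a + - a) by ring.
  replace (- (IZR nu * a + a)) with (- (IZR nu * a) + - a) by ring.
  replace (- (IZR nu * a + - a)) with (- (IZR nu * a) + a) by ring.
  rewrite !exp_plus. field.
Qed.

Lemma cosh_mul_cosh_IZR_le (nu : Z) a : 0 <= a ->
  cosh a * cosh (IZR nu * a) <= cosh (IZR (Z.abs nu + 1) * a).
Proof.
  intros Ha. rewrite cosh_mul_cosh_IZR.
  assert (Hle : forall mu, (Z.abs mu <= Z.abs nu + 1)%Z ->
            cosh (IZR mu * a) <= cosh (IZR (Z.abs nu + 1) * a)).
  { intros mu Hmu. apply cosh_le_Rabs. rewrite !Rabs_mult, (Rabs_right a) by lra.
    apply Rmult_le_compat_r; [lra|]. rewrite <- !abs_IZR. apply IZR_le. lia. }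
  assert (H1 := Hle (nu - 1)%Z ltac:(lia)). assert (H2 := Hle (nu + 1)%Z ltac:(lia)). lra.
Qed.

Lemma IZR_sq_eq_Rabs_INR m n :
  1 + IZR m ^ 2 + IZR n ^ 2 = 1 + Rabs (IZR m) ^ 2 + INR (Z.abs_nat n) ^ 2.
Proof.
  rewrite INR_IZR_INZ, Nat2Z.inj_abs_nat, abs_IZR, !pow2_abs. reflexivity.
Qed.

(* [1 + M^2 + k^2 <= M^2 + (k+1)^2], and [J^2 + (J (k+1) / M)^2 <= 81 + 324 <= 21^2]. *)
Lemma div_le_div_sqrt M k J : 1 <= M -> 0 <= k -> J <= 9 -> J * (k + 1) <= 18 * M ->
  / M * J <= 21 / sqrt (1 + M ^ 2 + k ^ 2).
Proof.
  intros HM Hk HJ HJk. set (X := 1 + M ^ 2 + k ^ 2).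
  assert (HX : 0 < X) by (unfold X; nra).
  assert (HD : 0 < sqrt X) by (apply sqrt_lt_R0; auto).
  assert (HD2 : sqrt X * sqrt X = X) by (apply sqrt_sqrt; lra).
  set (Q := / M * J).
  assert (HQM : Q * M = J) by (unfold Q; field; lra).
  apply (Rmult_le_reg_r (sqrt X)); auto. replace (21 / sqrt X * sqrt X) with 21 by (field; lra).
  destruct (Rle_dec Q 0) as [HQ|HQ]; [nra|].
  assert (HQk : Q * (k + 1) <= 18).
  { apply (Rmult_le_reg_r M); [lra|]. replace (Q * (k + 1) * M) with (J * (k + 1)) by (rewrite <- HQM; ring). lra. }
  assert (Hsq : Q * Q * X <= 441).
  { assert (H : Q * Q * X <= (Q * M) * (Q * M) + (Q * (k + 1)) * (Q * (k + 1))) by (unfold X; nra).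
    rewrite HQM in H.
    assert (0 <= J) by (rewrite <- HQM; nra).
    assert (J * J <= 81) by nra.
    assert (0 <= Q * (k + 1)) by nra.
    assert (Q * (k + 1) * (Q * (k + 1)) <= 324) by nra.
    lra. }
  assert (Hprod : Q * sqrt X * (Q * sqrt X) <= 441)
    by (replace (Q * sqrt X * (Q * sqrt X)) with (Q * Q * (sqrt X * sqrt X)) by ring; rewrite HD2; lra).
  nra.
Qed.

(* Coquelicot states real equalities at the carrier of a normed module; [ring] needs [R]. *)
Ltac R_eq := match goal with |- ?a = ?b => change (@eq R a b) end.

Lemma Rle_of_derive_nonneg (f df : R -> R) a b : a <= b ->
  (forall x, a <= x <= b -> ex_derive f x) ->
  (forall x, a < x < b -> is_derive f x (df x)) ->
  (forall x, a < x < b -> 0 <= df x) -> f a <= f b.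
Proof.
  intros Hab Hex Hd Hpos.
  destruct (Req_dec a b) as [->|Hne]; [lra|].
  assert (pr1 : forall c, a < c < b -> derivable_pt f c)
    by (intros c Hc; apply ex_derive_Reals_0, Hex; lra).
  assert (pr2 : forall c, a < c < b -> derivable_pt id c) by (intros; apply derivable_pt_id).
  destruct (MVT f id a b pr1 pr2) as [c [Hc Heq]]; [lra| | |].
  - intros x Hx. apply continuity_pt_filterlim. refine (ex_derive_continuous f x _). apply Hex; lra.
  - intros x Hx. apply derivable_continuous_pt, derivable_pt_id.
  - rewrite !Derive_Reals, (is_derive_unique f c (df c)), Derive_id in Heq by (apply Hd; lra).
    unfold id in Heq. specialize (Hpos c Hc). nra.
Qed.

Lemma is_derive_id_mul_sum_mul (f g h k : R -> R) x df dg dh dk :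
  is_derive f x df -> is_derive g x dg -> is_derive h x dh -> is_derive k x dk ->
  is_derive (fun y => y * (f y * g y + h y * k y)) x
    (f x * g x + h x * k x + x * (df * g x + f x * dg + (dh * k x + h x * dk))).
Proof.
  intros Hf Hg Hh Hk.
  replace (f x * g x + h x * k x) with (1 * (f x * g x + h x * k x)) by ring.
  apply (is_derive_mult (fun y => y) (fun y => f y * g y + h y * k y));
    [apply (is_derive_id (K:=R_AbsRing)) | | intros; apply Rmult_comm].
  apply (is_derive_plus (fun y => f y * g y) (fun y => h y * k y));
    [apply (is_derive_mult f g) | apply (is_derive_mult h k)]; auto; intros; apply Rmult_comm.
Qed.

Lemma ex_RInt_derivable (f : R -> R) a b : (forall z, ex_derive f z) -> ex_RInt f a b.
Proof.
  intros H. apply (ex_RInt_continuous (V:=R_CompleteNormedModule)).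
  intros z _. exact (ex_derive_continuous f z (H z)).
Qed.

Lemma RInt_lincomb (f g : R -> R) p q a b : ex_RInt f a b -> ex_RInt g a b ->
  RInt (fun t => p * f t + q * g t) a b = p * RInt f a b + q * RInt g a b.
Proof.
  intros Hf Hg. apply (is_RInt_unique (V:=R_CompleteNormedModule)).
  apply (is_RInt_plus (V:=R_NormedModule)); apply (is_RInt_scal (V:=R_NormedModule));
    apply (RInt_correct (V:=R_CompleteNormedModule)); auto.
Qed.

Lemma RInt_scal_R (f : R -> R) c a b : ex_RInt f a b ->
  RInt (fun t => c * f t) a b = c * RInt f a b.
Proof.
  intros Hf. apply (is_RInt_unique (V:=R_CompleteNormedModule)).
  apply (is_RInt_scal (V:=R_NormedModule)), (RInt_correct (V:=R_CompleteNormedModule)), Hf.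
Qed.

Lemma RInt_lincomb3 (f g h : R -> R) p q r a b :
  ex_RInt f a b -> ex_RInt g a b -> ex_RInt h a b ->
  RInt (fun t => p * f t + q * g t + r * h t) a b
  = p * RInt f a b + q * RInt g a b + r * RInt h a b.
Proof.
  intros Hf Hg Hh.
  assert (Hfg : ex_RInt (fun t => p * f t + q * g t) a b).
  { apply (ex_RInt_plus (V:=R_NormedModule)); apply (ex_RInt_scal (V:=R_NormedModule)); auto. }
  transitivity (1 * RInt (fun t => p * f t + q * g t) a b + r * RInt h a b).
  - rewrite <- RInt_lincomb by auto. apply RInt_ext. intros t _.
    R_eq. ring.
  - rewrite RInt_lincomb by auto. rewrite Rmult_1_l. reflexivity.
Qed.

Lemma RInt_antiderivative (f F : R -> R) a b : a <= b ->
  (forall x, a <= x <= b -> is_derive F x (f x)) ->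
  (forall x, a <= x <= b -> ex_derive f x) ->
  RInt f a b = F b - F a.
Proof.
  intros Hab HF Hf. apply (is_RInt_unique (V:=R_CompleteNormedModule)).
  apply (is_RInt_derive (V:=R_CompleteNormedModule) F f);
    intros x Hx; rewrite Rmin_left, Rmax_right in Hx by lra.
  - apply HF; auto.
  - exact (ex_derive_continuous f x (Hf x Hx)).
Qed.

Lemma is_derive_RInt_exp_param (c g : R -> R) a b x :
  (forall v, continuity_pt c v) -> (forall v, continuity_pt g v) ->
  is_derive (fun y => RInt (fun v => exp (y * c v) * g v) a b) x
            (RInt (fun v => c v * exp (x * c v) * g v) a b).
Proof.
  intros Hc Hg.
  assert (HD : forall u v, Derive (fun z => exp (z * c v) * g v) u = c v * exp (u * c v) * g v).
  { intros u v. apply is_derive_unique. auto_derive; auto. ring. }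
  assert (Hcont : forall y, ex_RInt (fun v => exp (y * c v) * g v) a b).
  { intros y. apply (ex_RInt_continuous (V:=R_CompleteNormedModule)). intros v _.
    apply continuity_pt_filterlim, continuity_pt_mult; [|auto].
    apply (continuity_pt_comp (fun v => y * c v) exp).
    - apply continuity_pt_mult; [apply continuity_pt_const; intros ??; auto | auto].
    - apply derivable_continuous_pt, derivable_pt_exp. }
  rewrite <- (RInt_ext (fun v => Derive (fun z => exp (z * c v) * g v) x))
    by (intros; apply HD).
  apply (is_derive_RInt_param (fun u v => exp (u * c v) * g v)).
  - apply filter_forall. intros y v _. auto_derive. auto.
  - intros v _. apply (continuity_2d_pt_ext (fun u v => c v * exp (u * c v) * g v)).
    { intros; symmetry; apply HD. }
    repeat apply continuity_2d_pt_mult.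
    + apply (continuity_1d_2d_pt_comp c (fun _ v => v)); [auto | apply continuity_2d_pt_id2].
    + apply (continuity_1d_2d_pt_comp exp (fun u v => u * c v)).
      { apply derivable_continuous_pt, derivable_pt_exp. }
      apply continuity_2d_pt_mult; [apply continuity_2d_pt_id1|].
      apply (continuity_1d_2d_pt_comp c (fun _ v => v)); [auto | apply continuity_2d_pt_id2].
    + apply (continuity_1d_2d_pt_comp g (fun _ v => v)); [auto | apply continuity_2d_pt_id2].
  - apply filter_forall. intros y. apply Hcont.
Qed.

Lemma RInt_pow_mul_exp_le n a x : 0 < a -> 0 <= x ->
  RInt (fun u => u ^ n * exp (- a * u)) 0 x <= INR (fact n) / a ^ S n.
Proof.
  intros Ha Hx.
  assert (Hex : forall k, ex_RInt (fun u => u ^ k * exp (- a * u)) 0 x)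
    by (intros k; apply ex_RInt_derivable; intros; auto_derive; auto).
  induction n as [|n IH].
  - rewrite (RInt_ext _ (fun u => exp (- a * u))) by (intros; simpl; ring).
    rewrite (RInt_antiderivative _ (fun u => - / a * exp (- a * u))); auto.
    + rewrite Rmult_0_r, exp_0. replace (INR (fact 0) / a ^ 1) with (/ a) by (simpl; field; lra).
      assert (0 < exp (- a * x)) by apply exp_pos.
      assert (0 < / a) by (apply Rinv_0_lt_compat; lra). nra.
    + intros u _. auto_derive; auto. field. lra.
    + intros u _. auto_derive. auto.
  - assert (HS : 0 < INR (S n)) by (apply lt_0_INR; lia).
    assert (Hparts : INR (S n) * RInt (fun u => u ^ n * exp (- a * u)) 0 x
                     + - a * RInt (fun u => u ^ S n * exp (- a * u)) 0 x
                     = x ^ S n * exp (- a * x)).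
    { rewrite <- RInt_lincomb by auto.
      rewrite (RInt_antiderivative _ (fun u => u ^ S n * exp (- a * u))); auto.
      - rewrite pow_i, Rmult_0_l by lia. ring.
      - intros u _. auto_derive; auto.
        change (match n with O => 1 | S _ => INR n + 1 end) with (INR (S n)). cbn [pow]. ring.
      - intros u _. auto_derive. auto. }
    assert (0 <= x ^ S n * exp (- a * x)) by (apply Rmult_le_pos; [apply pow_le; lra | left; apply exp_pos]).
    assert (Han : 0 < a ^ n) by (apply pow_lt; lra).
    apply (Rmult_le_reg_l a); auto.
    replace (a * (INR (fact (S n)) / a ^ S (S n))) with (INR (S n) * (INR (fact n) / a ^ S n))
      by (rewrite fact_simpl, mult_INR; cbn [pow]; field; split; lra).
    apply (Rmult_le_compat_l (INR (S n))) in IH; lra.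
Qed.

Lemma RInt_mul_exp_neg_le a b : 0 <= a -> a <= b ->
  RInt (fun s => s * exp (- s)) a b <= (a + 1) * exp (- a).
Proof.
  intros Ha Hab.
  rewrite (RInt_antiderivative _ (fun s => - (s + 1) * exp (- s))); auto.
  - assert (0 < exp (- b)) by apply exp_pos. nra.
  - intros x _. auto_derive; auto. ring.
  - intros x _. auto_derive. auto.
Qed.

Section NonnegIntegrand.
Variable f : R -> R.
Hypothesis f_integrable : forall a b, ex_RInt f a b.
Hypothesis f_ge0 : forall x, 0 <= x -> 0 <= f x.

Lemma RInt_0_le_upper B B' : 0 <= B -> B <= B' -> RInt f 0 B <= RInt f 0 B'.
Proof.
  intros HB HBB. rewrite <- (RInt_Chasles (V:=R_CompleteNormedModule) f 0 B B') by auto.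
  assert (0 <= RInt f B B') by (apply RInt_ge_0; auto; intros; apply f_ge0; lra).
  unfold plus; simpl. lra.
Qed.

Lemma RInt_gen_is_lub C : (forall B, 0 <= B -> RInt f 0 B <= C) ->
  is_lub (fun y => exists B, 0 <= B /\ y = RInt f 0 B)
    (RInt_gen f (at_point 0) (Rbar_locally p_infty)).
Proof.
  intros HC. set (E := fun y => exists B, 0 <= B /\ y = RInt f 0 B).
  assert (Hb : bound E) by (exists C; intros y [B [HB ->]]; auto).
  assert (Hne : exists y, E y) by (exists (RInt f 0 0), 0; split; [lra | auto]).
  destruct (completeness E Hb Hne) as [L HL].
  replace (RInt_gen f (at_point 0) (Rbar_locally p_infty)) with L; auto.
  symmetry. apply (is_RInt_gen_unique (V:=R_CompleteNormedModule)).
  intros P [eps Heps].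
  assert (HB0 : exists B0, 0 <= B0 /\ L - eps < RInt f 0 B0).
  { apply NNPP. intros Hno. assert (Hub : is_upper_bound E (L - eps)).
    { intros y [B [HB ->]]. apply Rnot_lt_le. intros Hlt. apply Hno. exists B. auto. }
    destruct HL as [_ HL]. specialize (HL _ Hub). destruct eps; simpl in *. lra. }
  destruct HB0 as [B0 [HB0 HB0']].
  apply (Filter_prod _ _ _ (fun a => a = 0) (fun b => B0 < b)); [reflexivity | exists B0; auto|].
  intros a b -> Hb'. simpl. exists (RInt f 0 b). split.
  - apply (RInt_correct (V:=R_CompleteNormedModule)). auto.
  - apply Heps. unfold ball; simpl; unfold AbsRing_ball, abs, minus, plus, opp; simpl.
    assert (RInt f 0 B0 <= RInt f 0 b) by (apply RInt_0_le_upper; lra).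
    assert (RInt f 0 b <= L) by (destruct HL as [HL _]; apply HL; exists b; split; auto; lra).
    apply Rabs_def1; lra.
Qed.

End NonnegIntegrand.

(** * The modified Bessel function I_n *)

Definition besselI_integrand (n : Z) (x a : R) := exp (x * cos a) * cos (IZR n * a).

Lemma besselI_def n x : besselI n x = / PI * RInt (besselI_integrand n x) 0 PI.
Proof. reflexivity. Qed.

Lemma ex_RInt_besselI_integrand n x a b : ex_RInt (besselI_integrand n x) a b.
Proof. apply ex_RInt_derivable. intros z. unfold besselI_integrand. auto_derive. auto. Qed.

Lemma besselI_derive n x :
  is_derive (besselI n) x ((besselI (n - 1) x + besselI (n + 1) x) / 2).
Proof.
  assert (HD : is_derive (fun y => RInt (besselI_integrand n y) 0 PI) x
     (/ 2 * RInt (besselI_integrand (n - 1) x) 0 PI + / 2 * RInt (besselI_integrand (n + 1) x) 0 PI)).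
  { rewrite <- RInt_lincomb by apply ex_RInt_besselI_integrand.
    rewrite (RInt_ext _ (fun a => cos a * exp (x * cos a) * cos (IZR n * a))).
    - apply (is_derive_RInt_exp_param cos (fun a => cos (IZR n * a))).
      + apply continuity_cos.
      + intros v. apply derivable_continuous_pt. reg.
    - intros a _. unfold besselI_integrand. R_eq.
      transitivity (exp (x * cos a) * (cos a * cos (IZR n * a))); [|ring].
      rewrite cos_mul_cos_IZR. ring. }
  rewrite !besselI_def. replace ((_ + _) / 2) with (/ PI * (/ 2 * RInt (besselI_integrand (n - 1) x) 0 PI
    + / 2 * RInt (besselI_integrand (n + 1) x) 0 PI)) by (R_eq; field; apply PI_neq0).
  apply (is_derive_scal (fun y => RInt (besselI_integrand n y) 0 PI)). exact HD.
Qed.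

Lemma ex_derive_besselI n x : ex_derive (besselI n) x.
Proof. eexists. apply besselI_derive. Qed.

(* Integrate the derivative of [exp (x cos a) sin (n a)], which vanishes at [0] and [PI]. *)
Lemma besselI_rec n x :
  2 * IZR n * besselI n x = x * (besselI (n - 1) x - besselI (n + 1) x).
Proof.
  assert (HPI := PI_RGT_0).
  assert (H : RInt (fun a => IZR n * besselI_integrand n x a + (- x / 2) * besselI_integrand (n - 1) x a
                     + x / 2 * besselI_integrand (n + 1) x a) 0 PI
              = exp (x * cos PI) * sin (IZR n * PI) - exp (x * cos 0) * sin (IZR n * 0)).
  { apply (RInt_antiderivative _ (fun a => exp (x * cos a) * sin (IZR n * a))); [lra| |].
    - intros a _. unfold besselI_integrand. auto_derive; auto. R_eq.
      transitivity (IZR n * (exp (x * cos a) * cos (IZR n * a))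
                    - x * exp (x * cos a) * (sin a * sin (IZR n * a))); [ring|].
      rewrite sin_mul_sin_IZR. field.
    - intros a _. unfold besselI_integrand. auto_derive. auto. }
  rewrite RInt_lincomb3 in H by apply ex_RInt_besselI_integrand.
  rewrite Rmult_0_r, sin_0, sin_eq_0_1 in H by (exists n; ring).
  rewrite !besselI_def.
  apply (Rmult_eq_reg_l PI); [|lra]. field_simplify; [|lra..]. nra.
Qed.

Lemma besselI_opp n x : besselI (- n) x = besselI n x.
Proof.
  unfold besselI. f_equal. apply RInt_ext. intros t _.
  rewrite opp_IZR, Ropp_mult_distr_l_reverse, cos_neg. reflexivity.
Qed.

Lemma besselI_abs_le n x : Rabs (besselI n x) <= exp (Rabs x).
Proof.
  rewrite besselI_def. assert (HP := PI_RGT_0).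
  rewrite Rabs_mult, (Rabs_right (/ PI)) by (left; apply Rinv_0_lt_compat; lra).
  assert (H : Rabs (RInt (besselI_integrand n x) 0 PI) <= (PI - 0) * exp (Rabs x)).
  { apply abs_RInt_le_const; [lra | apply ex_RInt_besselI_integrand|].
    intros t _. unfold besselI_integrand. rewrite Rabs_mult, Rabs_right by (left; apply exp_pos).
    assert (Hc : Rabs (cos (IZR n * t)) <= 1) by (apply Rabs_le, COS_bound).
    assert (He : exp (x * cos t) <= exp (Rabs x)).
    { apply exp_le. rewrite <- (Rmult_1_r (Rabs x)).
      eapply Rle_trans; [apply Rle_abs|]. rewrite Rabs_mult.
      apply Rmult_le_compat_l; [apply Rabs_pos | apply Rabs_le, COS_bound]. }
    assert (0 < exp (x * cos t)) by apply exp_pos.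
    assert (0 <= Rabs (cos (IZR n * t))) by apply Rabs_pos. nra. }
  apply (Rmult_le_reg_l PI); [lra|]. rewrite <- Rmult_assoc, Rinv_r; lra.
Qed.

Lemma besselI_0_ge0 n : 0 <= besselI n 0.
Proof.
  rewrite besselI_def. assert (HP := PI_RGT_0).
  destruct (Z.eq_dec n 0) as [->|Hn].
  - rewrite (RInt_ext _ (fun _ => 1)).
    + rewrite RInt_const. unfold scal; simpl; unfold mult; simpl.
      assert (0 < / PI) by (apply Rinv_0_lt_compat; lra). nra.
    + intros t _. unfold besselI_integrand. rewrite !Rmult_0_l, exp_0, cos_0. apply Rmult_1_l.
  - assert (Hn' : IZR n <> 0) by (apply not_0_IZR; auto).
    rewrite (RInt_antiderivative _ (fun a => sin (IZR n * a) / IZR n)); [| lra | |].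
    + rewrite Rmult_0_r, sin_0, sin_eq_0_1 by (exists n; ring). lra.
    + intros a _. unfold besselI_integrand. auto_derive; auto.
      rewrite Rmult_0_l, exp_0. field. auto.
    + intros a _. unfold besselI_integrand. auto_derive. auto.
Qed.

(* By induction on [N]: the case [N] for [I_(n-1)] and [I_(n+1)] makes the derivative
   [(I_(n-1) + I_(n+1)) / 2 + (x^(N+1)/(N+1)! + x^N/N!) e^x] of [I_n + x^(N+1)/(N+1)! e^x] nonnegative. *)
Lemma besselI_ge_neg_pow_div_fact (N : nat) n x : 0 <= x ->
  - (x ^ N / INR (fact N)) * exp x <= besselI n x.
Proof.
  revert n x. induction N as [|N IH]; intros n x Hx.
  - assert (H := besselI_abs_le n x). rewrite (Rabs_right x) in H by lra.
    apply Rabs_le_between in H. simpl. lra.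
  - set (g := fun y => exp y * (y ^ S N / INR (fact (S N)))).
    set (dg := fun y => exp y * (y ^ S N / INR (fact (S N))) + exp y * (y ^ N / INR (fact N))).
    assert (HF := INR_fact_pos N).
    assert (Hg : forall y, is_derive g y (dg y)).
    { intros y. unfold g, dg. rewrite fact_simpl, mult_INR. auto_derive; [auto|].
      change (match N with O => 1 | S _ => INR N + 1 end) with (INR (S N)).
      assert (0 < INR (S N)) by (apply lt_0_INR; lia). cbn [pow]. field. lra. }
    assert (Hmono : besselI n 0 + g 0 <= besselI n x + g x).
    { apply (Rle_of_derive_nonneg (fun y => besselI n y + g y)
        (fun y => (besselI (n - 1) y + besselI (n + 1) y) / 2 + dg y)); auto.
      - intros y _. eexists. apply (is_derive_plus (besselI n) g); [apply besselI_derive | apply Hg].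
      - intros y _. apply (is_derive_plus (besselI n) g); [apply besselI_derive | apply Hg].
      - intros y Hy. unfold dg.
        assert (H1 := IH (n - 1)%Z y ltac:(lra)). assert (H2 := IH (n + 1)%Z y ltac:(lra)).
        assert (0 <= exp y * (y ^ S N / INR (fact (S N)))).
        { apply Rmult_le_pos; [left; apply exp_pos|].
          apply Rmult_le_pos; [apply pow_le; lra | left; apply Rinv_0_lt_compat, INR_fact_pos]. }
        lra. }
    assert (H0 := besselI_0_ge0 n).
    assert (Hg0 : g 0 = 0) by (unfold g; simpl; unfold Rdiv; ring).
    unfold g in Hmono, Hg0. lra.
Qed.

Lemma besselI_ge0 n x : 0 <= x -> 0 <= besselI n x.
Proof.
  intros Hx. apply Rnot_lt_le. intros Hneg.
  set (eps := - besselI n x / exp x).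
  assert (Hexp := exp_pos x).
  assert (Heps : 0 < eps) by (apply Rdiv_lt_0_compat; lra).
  destruct (cv_speed_pow_fact x eps Heps) as [N HN].
  specialize (HN N (le_n N)). unfold Rdist in HN. rewrite Rminus_0_r in HN.
  apply Rabs_def2 in HN.
  assert (HL := besselI_ge_neg_pow_div_fact N n x Hx).
  assert (E : - eps * exp x = besselI n x) by (unfold eps; field; lra).
  nra.
Qed.

Lemma besselI_increasing n a b : 0 <= a -> a <= b -> besselI n a <= besselI n b.
Proof.
  intros Ha Hab. apply (Rle_of_derive_nonneg _ (fun y => (besselI (n - 1) y + besselI (n + 1) y) / 2));
    auto using ex_derive_besselI, besselI_derive.
  intros y Hy. assert (H1 := besselI_ge0 (n - 1) y ltac:(lra)).
  assert (H2 := besselI_ge0 (n + 1) y ltac:(lra)). lra.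
Qed.

(* [x ^ -k I_k(x)] is nondecreasing, its derivative being [x ^ -k I_(k+1)(x)]. *)
Lemma besselI_pow_ratio_le (k : nat) t s : 0 < t -> t <= s ->
  besselI (Z.of_nat k) t * s ^ k <= besselI (Z.of_nat k) s * t ^ k.
Proof.
  intros Ht Hts. set (n := Z.of_nat k).
  set (E := fun y => exp (- INR k * ln y)).
  assert (HE : forall y, 0 < y -> E y = / y ^ k).
  { intros y Hy. unfold E. rewrite Ropp_mult_distr_l_reverse, exp_Ropp.
    f_equal. rewrite <- Rpower_pow by auto. reflexivity. }
  assert (HD : forall y, 0 < y -> is_derive (fun y => besselI n y * E y) y (besselI (n + 1) y * E y)).
  { intros y Hy.
    assert (HEd : is_derive E y (- INR k / y * E y)) by (unfold E; auto_derive; [auto | field; lra]).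
    replace (besselI (n + 1) y * E y) with
      ((besselI (n - 1) y + besselI (n + 1) y) / 2 * E y + besselI n y * (- INR k / y * E y)).
    - apply (is_derive_mult (besselI n) E); [apply besselI_derive | auto | intros; apply Rmult_comm].
    - assert (R := besselI_rec n y). unfold n in R |- *. rewrite <- INR_IZR_INZ in R.
      apply (Rmult_eq_reg_l (2 * y)); [|lra].
      transitivity (E y * (y * (besselI (Z.of_nat k - 1) y + besselI (Z.of_nat k + 1) y)
                           - 2 * INR k * besselI (Z.of_nat k) y)); [field; lra|].
      rewrite R. ring. }
  assert (Hmono : besselI n t * E t <= besselI n s * E s).
  { apply (Rle_of_derive_nonneg (fun y => besselI n y * E y) (fun y => besselI (n + 1) y * E y)); auto.
    - intros y Hy. eexists. apply HD; lra.
    - intros y Hy. apply HD; lra.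
    - intros y Hy. apply Rmult_le_pos; [apply besselI_ge0; lra | left; apply exp_pos]. }
  rewrite !HE in Hmono by lra.
  assert (0 < t ^ k) by (apply pow_lt; lra). assert (0 < s ^ k) by (apply pow_lt; lra).
  apply (Rmult_le_reg_r (/ t ^ k * / s ^ k)); [apply Rmult_lt_0_compat; apply Rinv_0_lt_compat; auto|].
  replace (besselI n t * s ^ k * (/ t ^ k * / s ^ k)) with (besselI n t * / t ^ k) by (field; lra).
  replace (besselI n s * t ^ k * (/ t ^ k * / s ^ k)) with (besselI n s * / s ^ k) by (field; lra).
  auto.
Qed.

Lemma besselI_le_pow (k : nat) u : 0 <= u ->
  besselI (Z.of_nat k) u <= (u / 2) ^ k / INR (fact k) * exp u.
Proof.
  intros Hu. induction k as [|k IH].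
  - assert (H := besselI_abs_le 0 u). rewrite (Rabs_right u) in H by lra.
    apply Rabs_le_between in H. simpl. lra.
  - assert (R := besselI_rec (Z.of_nat (S k)) u).
    replace (Z.of_nat (S k) - 1)%Z with (Z.of_nat k) in R by lia.
    rewrite <- INR_IZR_INZ in R.
    assert (P := besselI_ge0 (Z.of_nat (S k) + 1) u Hu).
    assert (HS : 0 < INR (S k)) by (apply lt_0_INR; lia).
    assert (HF := INR_fact_pos k).
    rewrite fact_simpl, mult_INR. cbn [pow].
    apply (Rmult_le_reg_l (2 * INR (S k))); [lra|]. rewrite R.
    replace (2 * INR (S k) * (u / 2 * (u / 2) ^ k / (INR (S k) * INR (fact k)) * exp u))
      with (u * ((u / 2) ^ k / INR (fact k) * exp u)) by (field; lra).
    nra.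
Qed.

(** * The modified Bessel function K_n *)

Definition besselK_integrand (nu : Z) (x a : R) := exp (- x * cosh a) * cosh (IZR nu * a).

Definition besselK_trunc (nu : Z) (B x : R) := RInt (besselK_integrand nu x) 0 B.

Lemma ex_RInt_besselK_integrand nu x a b : ex_RInt (besselK_integrand nu x) a b.
Proof. apply ex_RInt_derivable. intros z. unfold besselK_integrand, cosh. auto_derive. auto. Qed.

Lemma besselK_integrand_pos nu x a : 0 < besselK_integrand nu x a.
Proof. apply Rmult_lt_0_compat; [apply exp_pos | apply cosh_pos]. Qed.

Lemma besselK_trunc_ge0 nu B x : 0 <= B -> 0 <= besselK_trunc nu B x.
Proof.
  intros HB. apply RInt_ge_0; auto using ex_RInt_besselK_integrand.
  intros; left; apply besselK_integrand_pos.
Qed.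

Lemma besselK_trunc_le_upper nu x B B' : 0 <= B -> B <= B' ->
  besselK_trunc nu B x <= besselK_trunc nu B' x.
Proof.
  apply RInt_0_le_upper; [apply ex_RInt_besselK_integrand|].
  intros; left; apply besselK_integrand_pos.
Qed.

Lemma besselK_integrand_le nu x a : 0 < x -> 0 <= a ->
  besselK_integrand nu x a
  <= INR (fact (S (Z.abs_nat nu))) * (2 / x) ^ S (Z.abs_nat nu) * exp (- a).
Proof.
  intros Hx Ha. set (k := Z.abs_nat nu). set (z := exp a).
  assert (Hz : 0 < z) by apply exp_pos.
  assert (Hcn : cosh (IZR nu * a) <= z ^ k).
  { unfold z, k. rewrite <- exp_mult_INR, <- Rabs_IZR_mul by auto. apply cosh_le_exp_Rabs. }
  assert (He : exp (- x * cosh a) <= exp (- (x * z / 2))).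
  { apply exp_le. assert (exp (- a) > 0) by apply exp_pos. unfold cosh in *. fold z. nra. }
  assert (H := exp_neg_mul_pow_le (S k) x z Hx Hz).
  rewrite exp_Ropp. fold z. unfold besselK_integrand.
  assert (0 < exp (- (x * z / 2))) by apply exp_pos.
  apply Rle_trans with (exp (- (x * z / 2)) * z ^ k).
  { apply Rmult_le_compat; auto; [left; apply exp_pos | left; apply cosh_pos]. }
  apply (Rmult_le_reg_r z); auto.
  replace (INR (fact (S k)) * (2 / x) ^ S k * / z * z) with (INR (fact (S k)) * (2 / x) ^ S k)
    by (field; lra).
  simpl in H |- *. lra.
Qed.

Lemma besselK_trunc_le_const nu x B : 0 < x -> 0 <= B ->
  besselK_trunc nu B x <= INR (fact (S (Z.abs_nat nu))) * (2 / x) ^ S (Z.abs_nat nu).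
Proof.
  intros Hx HB. set (C := INR (fact (S (Z.abs_nat nu))) * (2 / x) ^ S (Z.abs_nat nu)).
  assert (HC : 0 < C)
    by (apply Rmult_lt_0_compat; [apply INR_fact_pos | apply pow_lt, Rdiv_lt_0_compat; lra]).
  apply Rle_trans with (RInt (fun a => C * exp (- a)) 0 B).
  - apply RInt_le; auto using ex_RInt_besselK_integrand.
    + apply ex_RInt_derivable. intros; auto_derive; auto.
    + intros a Ha. apply besselK_integrand_le; lra.
  - rewrite (RInt_antiderivative _ (fun a => - C * exp (- a))); auto.
    + rewrite Ropp_0, exp_0. assert (0 < exp (- B)) by apply exp_pos. nra.
    + intros a _. auto_derive; auto. ring.
    + intros a _. auto_derive. auto.
Qed.

Lemma besselK_is_lub nu x : 0 < x ->
  is_lub (fun y => exists B, 0 <= B /\ y = besselK_trunc nu B x) (besselK nu x).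
Proof.
  intros Hx. apply (RInt_gen_is_lub _ (ex_RInt_besselK_integrand nu x)) with
    (C := INR (fact (S (Z.abs_nat nu))) * (2 / x) ^ S (Z.abs_nat nu)).
  - intros; left; apply besselK_integrand_pos.
  - intros. apply besselK_trunc_le_const; auto.
Qed.

Lemma besselK_trunc_le nu x B : 0 < x -> 0 <= B -> besselK_trunc nu B x <= besselK nu x.
Proof. intros Hx HB. apply (besselK_is_lub nu x Hx). exists B; auto. Qed.

Lemma besselK_le_of_trunc nu x L : 0 < x ->
  (forall B, 0 <= B -> besselK_trunc nu B x <= L) -> besselK nu x <= L.
Proof. intros Hx H. apply (besselK_is_lub nu x Hx). intros y [B [HB ->]]. auto. Qed.

Lemma besselK_ge0 nu x : 0 < x -> 0 <= besselK nu x.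
Proof.
  intros Hx. eapply Rle_trans; [apply (besselK_trunc_ge0 nu 0 x); lra|].
  apply besselK_trunc_le; lra.
Qed.

Lemma besselK_le_order nu mu x : 0 < x -> (Z.abs nu <= Z.abs mu)%Z ->
  besselK nu x <= besselK mu x.
Proof.
  intros Hx Hnm. apply besselK_le_of_trunc; auto. intros B HB.
  eapply Rle_trans; [| apply besselK_trunc_le; eauto].
  apply RInt_le; auto using ex_RInt_besselK_integrand.
  intros a Ha. apply Rmult_le_compat_l; [left; apply exp_pos|].
  apply cosh_le_Rabs. rewrite !Rabs_mult, (Rabs_right a) by lra.
  apply Rmult_le_compat_r; [lra|]. rewrite <- !abs_IZR. apply IZR_le. auto.
Qed.

Lemma exp_mul_besselK_le nu s s' : 0 < s -> s <= s' ->
  exp s' * besselK nu s' <= exp s * besselK nu s.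
Proof.
  intros Hs Hss.
  assert (Hle : besselK nu s' <= exp (s - s') * besselK nu s).
  { apply besselK_le_of_trunc; [lra|]. intros B HB.
    apply Rle_trans with (RInt (fun a => exp (s - s') * besselK_integrand nu s a) 0 B).
    - apply RInt_le; auto using ex_RInt_besselK_integrand.
      + apply (ex_RInt_scal (V:=R_NormedModule)), ex_RInt_besselK_integrand.
      + intros a Ha. unfold besselK_integrand. rewrite <- Rmult_assoc, <- exp_plus.
        apply Rmult_le_compat_r; [left; apply cosh_pos|]. apply exp_le.
        assert (H := one_le_cosh a). nra.
    - rewrite RInt_scal_R by apply ex_RInt_besselK_integrand.
      apply Rmult_le_compat_l; [left; apply exp_pos | apply besselK_trunc_le; auto]. }
  assert (E : exp s' * exp (s - s') = exp s) by (rewrite <- exp_plus; f_equal; ring).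
  apply (Rmult_le_compat_l (exp s')) in Hle; [|left; apply exp_pos].
  rewrite <- Rmult_assoc, E in Hle. exact Hle.
Qed.

Lemma besselK_decreasing nu s s' : 0 < s -> s <= s' -> besselK nu s' <= besselK nu s.
Proof.
  intros Hs Hss. assert (H := exp_mul_besselK_le nu s s' Hs Hss).
  assert (exp s <= exp s') by (apply exp_le; auto).
  assert (0 <= besselK nu s) by (apply besselK_ge0; auto).
  assert (0 < exp s) by apply exp_pos. nra.
Qed.

(* With [h = s' - s] and [c = cosh a]: [e^(-h c) >= 1 - h c] and [c cosh (nu a) <= cosh ((|nu|+1) a)]. *)
Lemma besselK_integrand_le_lip nu s s' a : 0 < s -> s <= s' -> 0 <= a ->
  besselK_integrand nu s a
  <= besselK_integrand nu s' a + (s' - s) * besselK_integrand (Z.abs nu + 1) s a.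
Proof.
  intros Hs Hss Ha. unfold besselK_integrand.
  assert (Hc := one_le_cosh a).
  assert (E : exp (- s' * cosh a) = exp (- s * cosh a) * exp (- ((s' - s) * cosh a)))
    by (rewrite <- exp_plus; f_equal; ring).
  assert (H1 := exp_ineq1_le (- ((s' - s) * cosh a))).
  assert (H2 := cosh_mul_cosh_IZR_le nu a Ha).
  assert (He : 0 < exp (- s * cosh a)) by apply exp_pos.
  assert (Hcn : 0 < cosh (IZR nu * a)) by apply cosh_pos.
  rewrite E.
  set (e := exp (- s * cosh a)) in *. set (c := cosh a) in *. set (cn := cosh (IZR nu * a)) in *.
  set (d := exp (- ((s' - s) * c))) in *.
  assert (e * cn * (s' - s) * c <= (s' - s) * (e * cosh (IZR (Z.abs nu + 1) * a))).
  { replace (e * cn * (s' - s) * c) with ((s' - s) * (e * (c * cn))) by ring.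
    apply Rmult_le_compat_l; [lra|]. apply Rmult_le_compat_l; lra. }
  assert (e * cn * (1 - (s' - s) * c) <= e * cn * d) by (apply Rmult_le_compat_l; nra).
  nra.
Qed.

Lemma besselK_le_lip nu s s' : 0 < s -> s <= s' ->
  besselK nu s <= besselK nu s' + (s' - s) * besselK (Z.abs nu + 1) s.
Proof.
  intros Hs Hss. apply besselK_le_of_trunc; auto. intros B HB.
  apply Rle_trans with
    (RInt (fun a => 1 * besselK_integrand nu s' a + (s' - s) * besselK_integrand (Z.abs nu + 1) s a) 0 B).
  - apply RInt_le; auto using ex_RInt_besselK_integrand.
    + apply (ex_RInt_plus (V:=R_NormedModule)); apply (ex_RInt_scal (V:=R_NormedModule));
        apply ex_RInt_besselK_integrand.
    + intros a Ha. rewrite Rmult_1_l. apply besselK_integrand_le_lip; lra.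
  - rewrite RInt_lincomb by apply ex_RInt_besselK_integrand. rewrite Rmult_1_l.
    apply Rplus_le_compat; [apply besselK_trunc_le; lra|].
    apply Rmult_le_compat_l; [lra | apply besselK_trunc_le; lra].
Qed.

(* On [[s0/2, +oo)], [K_nu] is Lipschitz with constant [K_(|nu|+1)(s0/2)]. *)
Lemma besselK_continuous nu s0 : 0 < s0 -> continuity_pt (besselK nu) s0.
Proof.
  intros Hs0. intros eps Heps. simpl.
  set (L := besselK (Z.abs nu + 1) (s0 / 2)).
  assert (HL : 0 <= L) by (apply besselK_ge0; lra).
  exists (Rmin (s0 / 2) (eps / (L + 1))). split.
  { apply Rmin_pos; [lra | apply Rdiv_lt_0_compat; lra]. }
  intros x [_ Hx]. unfold R_dist in *.
  assert (Hd1 : Rabs (x - s0) < s0 / 2) by (eapply Rlt_le_trans; [exact Hx | apply Rmin_l]).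
  assert (Hd2 : Rabs (x - s0) < eps / (L + 1)) by (eapply Rlt_le_trans; [exact Hx | apply Rmin_r]).
  apply Rabs_def2 in Hd1.
  assert (HLe : Rabs (x - s0) * L < eps).
  { apply Rle_lt_trans with (eps / (L + 1) * L).
    - apply Rmult_le_compat_r; [lra | left; exact Hd2].
    - apply (Rmult_lt_reg_r (L + 1)); [lra|].
      replace (eps / (L + 1) * L * (L + 1)) with (eps * L) by (field; lra). nra. }
  assert (HLd : forall y, s0 / 2 <= y -> besselK (Z.abs nu + 1) y <= L)
    by (intros; apply besselK_decreasing; lra).
  destruct (Rle_dec x s0) as [Hle|Hgt].
  - assert (H1 := besselK_le_lip nu x s0 ltac:(lra) Hle).
    assert (H2 := besselK_decreasing nu x s0 ltac:(lra) Hle).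
    assert (H3 := HLd x ltac:(lra)).
    rewrite Rabs_left1 in HLe by lra. rewrite Rabs_right by lra. nra.
  - assert (H1 := besselK_le_lip nu s0 x ltac:(lra) ltac:(lra)).
    assert (H2 := besselK_decreasing nu s0 x ltac:(lra) ltac:(lra)).
    assert (H3 := HLd s0 ltac:(lra)).
    rewrite Rabs_right in HLe by lra. rewrite Rabs_left1 by lra. nra.
Qed.

Lemma besselK_trunc_derive nu B x : is_derive (besselK_trunc nu B) x
  (- ((besselK_trunc (nu - 1) B x + besselK_trunc (nu + 1) B x) / 2)).
Proof.
  apply (is_derive_ext (fun y => RInt (fun a => exp (y * - cosh a) * cosh (IZR nu * a)) 0 B)).
  { intros y. apply RInt_ext. intros a _. unfold besselK_integrand. do 2 f_equal. ring. }
  replace (- ((besselK_trunc (nu - 1) B x + besselK_trunc (nu + 1) B x) / 2)) with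
    (RInt (fun a => - cosh a * exp (x * - cosh a) * cosh (IZR nu * a)) 0 B).
  { apply (is_derive_RInt_exp_param (fun a => - cosh a) (fun a => cosh (IZR nu * a))).
    - intros v. apply derivable_continuous_pt. reg.
    - intros v. apply derivable_continuous_pt. reg. }
  unfold besselK_trunc.
  rewrite (RInt_ext _ (fun a => - / 2 * besselK_integrand (nu - 1) x a
                                + - / 2 * besselK_integrand (nu + 1) x a)).
  - rewrite RInt_lincomb by apply ex_RInt_besselK_integrand. R_eq. field.
  - intros a _. unfold besselK_integrand. R_eq.
    transitivity (- (exp (- x * cosh a) * (cosh a * cosh (IZR nu * a)))).
    + replace (x * - cosh a) with (- x * cosh a) by ring. ring.
    + rewrite cosh_mul_cosh_IZR. field.
Qed.

(* Integrate the derivative of [exp (- x cosh a) sinh (nu a)] over [[0, B]]. *)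
Lemma besselK_trunc_rec nu B x : 0 <= B ->
  IZR nu * besselK_trunc nu B x = exp (- x * cosh B) * sinh (IZR nu * B)
    + x / 2 * (besselK_trunc (nu + 1) B x - besselK_trunc (nu - 1) B x).
Proof.
  intros HB.
  assert (H : RInt (fun a => IZR nu * besselK_integrand nu x a
                     + (- x / 2) * besselK_integrand (nu + 1) x a
                     + x / 2 * besselK_integrand (nu - 1) x a) 0 B
              = exp (- x * cosh B) * sinh (IZR nu * B) - exp (- x * cosh 0) * sinh (IZR nu * 0)).
  { apply (RInt_antiderivative _ (fun a => exp (- x * cosh a) * sinh (IZR nu * a))); auto.
    - intros a _. unfold besselK_integrand, cosh, sinh. auto_derive; auto. R_eq.
      transitivity (IZR nu * (exp (- x * cosh a) * cosh (IZR nu * a))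
                    - x * exp (- x * cosh a) * (sinh a * sinh (IZR nu * a))).
      + unfold cosh, sinh, Rdiv. field.
      + rewrite sinh_mul_sinh_IZR. unfold cosh, Rdiv. field.
    - intros a _. unfold besselK_integrand, cosh. auto_derive. auto. }
  rewrite RInt_lincomb3 in H by apply ex_RInt_besselK_integrand.
  rewrite Rmult_0_r, sinh_0, Rmult_0_r, Rminus_0_r in H.
  unfold besselK_trunc. R_eq. lra.
Qed.

(** * Pointwise bounds on K_(n+1)(s) I_n(t) *)

(* With [B = +oo] this is [x (I_n K_(n+1) + I_(n+1) K_n) = 1], the Wronskian identity. *)
Definition wronskian_trunc (n : Z) (B y : R) :=
  y * (besselI n y * besselK_trunc (n + 1) B y + besselI (n + 1) y * besselK_trunc n B y).

Lemma ex_derive_wronskian_trunc n B x : ex_derive (wronskian_trunc n B) x.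
Proof.
  eexists. apply (is_derive_id_mul_sum_mul (besselI n) (besselK_trunc (n + 1) B)
    (besselI (n + 1)) (besselK_trunc n B));
    [apply besselI_derive | apply besselK_trunc_derive | apply besselI_derive | apply besselK_trunc_derive].
Qed.

Lemma wronskian_trunc_derive n B x : 0 <= B -> 0 < x ->
  is_derive (wronskian_trunc n B) x
    (exp (- x * cosh B) * (besselI n x * sinh (IZR (n + 1) * B) - besselI (n + 1) x * sinh (IZR n * B))).
Proof.
  intros HB Hx.
  replace (exp (- x * cosh B) * _) with
    (besselI n x * besselK_trunc (n + 1) B x + besselI (n + 1) x * besselK_trunc n B x
     + x * ((besselI (n - 1) x + besselI (n + 1) x) / 2 * besselK_trunc (n + 1) B x
            + besselI n x * - ((besselK_trunc (n + 1 - 1) B x + besselK_trunc (n + 1 + 1) B x) / 2)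
            + ((besselI (n + 1 - 1) x + besselI (n + 1 + 1) x) / 2 * besselK_trunc n B x
               + besselI (n + 1) x * - ((besselK_trunc (n - 1) B x + besselK_trunc (n + 1) B x) / 2)))).
  { apply (is_derive_id_mul_sum_mul (besselI n) (besselK_trunc (n + 1) B)
      (besselI (n + 1)) (besselK_trunc n B));
      [apply besselI_derive | apply besselK_trunc_derive | apply besselI_derive | apply besselK_trunc_derive]. }
  replace (n + 1 - 1)%Z with n by lia.
  assert (R1 := besselI_rec n x).
  assert (R2 := besselI_rec (n + 1) x). replace (n + 1 - 1)%Z with n in R2 by lia.
  assert (R3 := besselK_trunc_rec n B x HB).
  assert (R4 := besselK_trunc_rec (n + 1) B x HB). replace (n + 1 - 1)%Z with n in R4 by lia.
  rewrite plus_IZR in R2, R4 |- *. set (N := IZR n) in *.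
  set (I0 := besselI n x) in *. set (Im := besselI (n - 1) x) in *.
  set (I1 := besselI (n + 1) x) in *. set (I2 := besselI (n + 1 + 1) x) in *.
  set (K0 := besselK_trunc n B x) in *. set (Km := besselK_trunc (n - 1) B x) in *.
  set (K1 := besselK_trunc (n + 1) B x) in *. set (K2 := besselK_trunc (n + 1 + 1) B x) in *.
  set (e := exp (- x * cosh B)) in *.
  assert (HIm : Im = I1 + 2 * N * I0 / x) by (apply (Rmult_eq_reg_l x); [field_simplify|]; lra).
  assert (HI2 : I2 = I0 - 2 * (N + 1) * I1 / x) by (apply (Rmult_eq_reg_l x); [field_simplify|]; lra).
  assert (HKm : Km = K1 - 2 * (N * K0 - e * sinh (N * B)) / x)
    by (apply (Rmult_eq_reg_l x); [field_simplify|]; lra).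
  assert (HK2 : K2 = K0 + 2 * ((N + 1) * K1 - e * sinh ((N + 1) * B)) / x)
    by (apply (Rmult_eq_reg_l x); [field_simplify|]; lra).
  rewrite HIm, HI2, HKm, HK2. R_eq. field. lra.
Qed.

(* Uses [I_n(y) <= (y/2)^n / n! e^y] and drops the nonpositive term. *)
Lemma wronskian_trunc_derive_le (n : nat) B y : 0 <= B -> 0 <= y ->
  exp (- y * cosh B) * (besselI (Z.of_nat n) y * sinh (IZR (Z.of_nat n + 1) * B)
                        - besselI (Z.of_nat n + 1) y * sinh (IZR (Z.of_nat n) * B))
  <= sinh (IZR (Z.of_nat n + 1) * B) / (2 ^ n * INR (fact n)) * (y ^ n * exp (- (cosh B - 1) * y)).
Proof.
  intros HB Hy. set (m := Z.of_nat n).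
  assert (HN : 0 <= IZR m) by (unfold m; rewrite <- INR_IZR_INZ; apply pos_INR).
  assert (HS : 0 <= sinh (IZR (m + 1) * B)) by (apply sinh_ge0; rewrite plus_IZR; nra).
  assert (HI0 := besselI_le_pow n y Hy). fold m in HI0.
  assert (0 <= besselI (m + 1) y * sinh (IZR m * B))
    by (apply Rmult_le_pos; [apply besselI_ge0; lra | apply sinh_ge0; nra]).
  assert (E : exp (- y * cosh B) * ((y / 2) ^ n / INR (fact n) * exp y) * sinh (IZR (m + 1) * B)
              = sinh (IZR (m + 1) * B) / (2 ^ n * INR (fact n)) * (y ^ n * exp (- (cosh B - 1) * y))).
  { replace (exp (- (cosh B - 1) * y)) with (exp (- y * cosh B) * exp y)
      by (rewrite <- exp_plus; f_equal; ring).
    unfold Rdiv. rewrite Rpow_mult_distr, pow_inv.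
    assert (0 < INR (fact n)) by apply INR_fact_pos.
    assert (0 < 2 ^ n) by (apply pow_lt; lra).
    field. split; lra. }
  assert (exp (- y * cosh B) * besselI m y * sinh (IZR (m + 1) * B)
          <= exp (- y * cosh B) * ((y / 2) ^ n / INR (fact n) * exp y) * sinh (IZR (m + 1) * B)).
  { apply Rmult_le_compat_r; auto. apply Rmult_le_compat_l; auto. left; apply exp_pos. }
  assert (0 < exp (- y * cosh B)) by apply exp_pos.
  nra.
Qed.

Lemma wronskian_trunc_le (n : nat) B x : 0 < B -> 0 <= x ->
  wronskian_trunc (Z.of_nat n) B x
  <= sinh (IZR (Z.of_nat n + 1) * B) / (2 ^ n * INR (fact n))
     * RInt (fun u => u ^ n * exp (- (cosh B - 1) * u)) 0 x.
Proof.
  intros HB Hx. set (m := Z.of_nat n).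
  set (c := sinh (IZR (m + 1) * B) / (2 ^ n * INR (fact n))).
  set (G := fun u => u ^ n * exp (- (cosh B - 1) * u)).
  assert (HG : forall y, is_derive (fun y => RInt G 0 y) y (G y)).
  { intros y. apply (is_derive_RInt (V:=R_NormedModule) G _ 0).
    - apply filter_forall. intros b. apply (RInt_correct (V:=R_CompleteNormedModule)).
      apply ex_RInt_derivable. intros; unfold G; auto_derive; auto.
    - apply (ex_derive_continuous (V:=R_NormedModule)). unfold G. auto_derive. auto. }
  assert (Hmono : c * RInt G 0 0 - wronskian_trunc m B 0 <= c * RInt G 0 x - wronskian_trunc m B x).
  { apply (Rle_of_derive_nonneg (fun y => c * RInt G 0 y - wronskian_trunc m B y)
      (fun y => c * G y - exp (- y * cosh B) * (besselI m y * sinh (IZR (m + 1) * B)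
                                               - besselI (m + 1) y * sinh (IZR m * B)))); auto.
    - intros y _. eexists. apply (is_derive_minus (fun y => c * RInt G 0 y) (wronskian_trunc m B)).
      + apply (is_derive_scal (fun y => RInt G 0 y)), HG.
      + apply Derive_correct, ex_derive_wronskian_trunc.
    - intros y Hy. apply (is_derive_minus (fun y => c * RInt G 0 y) (wronskian_trunc m B)).
      + apply (is_derive_scal (fun y => RInt G 0 y)), HG.
      + apply wronskian_trunc_derive; lra.
    - intros y Hy. assert (H := wronskian_trunc_derive_le n B y ltac:(lra) ltac:(lra)).
      fold m c in H. unfold G. lra. }
  unfold wronskian_trunc in Hmono at 1. rewrite RInt_point in Hmono.
  unfold zero in Hmono; simpl in Hmono. lra.
Qed.

(* With [q = e^B / 2 >= n + 2]: [sinh ((n+1) B) <= 2^n q^(n+1)] and [q <= (1 + 1/(n+1)) (cosh B - 1)]. *)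
Lemma sinh_le_pow_cosh_sub1 (n : nat) B : ln (2 * (INR n + 2)) <= B ->
  sinh ((INR n + 1) * B) <= 3 * (2 ^ n * (cosh B - 1) ^ S n).
Proof.
  intros HB. set (q := exp B / 2). set (a := cosh B - 1).
  assert (Hn0 := pos_INR n).
  assert (Hq : INR n + 2 <= q).
  { assert (H := exp_le _ _ HB). rewrite exp_ln in H by lra. unfold q. lra. }
  assert (Ha : q - 1 <= a) by (unfold a, q, cosh; assert (0 < exp (- B)) by apply exp_pos; lra).
  assert (Hsinh : sinh ((INR n + 1) * B) <= 2 ^ n * q ^ S n).
  { unfold sinh, q. rewrite <- S_INR.
    assert (0 < exp (- (INR (S n) * B))) by apply exp_pos. rewrite exp_mult_INR. unfold Rdiv. rewrite Rpow_mult_distr, pow_inv.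
    replace (2 ^ n * (exp B ^ S n * / 2 ^ S n)) with (exp B ^ S n / 2)
      by (cbn [pow]; field; apply pow_nonzero; lra).
    lra. }
  assert (Hratio : q <= (1 + / INR (S n)) * a).
  { rewrite S_INR. apply (Rmult_le_reg_l (INR n + 1)); [lra|].
    replace ((INR n + 1) * ((1 + / (INR n + 1)) * a)) with ((INR n + 2) * a) by (field; lra). nra. }
  assert (Hpow : q ^ S n <= ((1 + / INR (S n)) * a) ^ S n) by (apply pow_incr; lra).
  rewrite Rpow_mult_distr in Hpow.
  assert (H3 := one_plus_inv_pow_le_3 n).
  assert (0 < a ^ S n) by (apply pow_lt; lra).
  assert (0 < 2 ^ n) by (apply pow_lt; lra).
  eapply Rle_trans; [exact Hsinh|].
  replace (3 * (2 ^ n * a ^ S n)) with (2 ^ n * (3 * a ^ S n)) by ring.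
  apply Rmult_le_compat_l; [lra|]. nra.
Qed.

Lemma wronskian_trunc_le_3 (n : nat) B x : ln (2 * (INR n + 2)) <= B -> 0 <= x ->
  wronskian_trunc (Z.of_nat n) B x <= 3.
Proof.
  intros HB Hx. set (a := cosh B - 1).
  assert (Hn0 := pos_INR n).
  assert (HeB : 4 <= exp B) by (assert (H := exp_le _ _ HB); rewrite exp_ln in H; lra).
  assert (HB0 : 0 < B) by (apply exp_lt_inv; rewrite exp_0; lra).
  assert (Ha : 1 <= a) by (unfold a, cosh; assert (0 < exp (- B)) by apply exp_pos; lra).
  assert (Han : 0 < a ^ S n) by (apply pow_lt; lra).
  assert (HF := INR_fact_pos n). assert (H2n : 0 < 2 ^ n) by (apply pow_lt; lra).
  assert (Hsinh := sinh_le_pow_cosh_sub1 n B HB).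
  replace (INR n + 1) with (IZR (Z.of_nat n + 1)) in Hsinh
    by (rewrite plus_IZR, <- INR_IZR_INZ; reflexivity).
  fold a in Hsinh.
  assert (HS : 0 <= sinh (IZR (Z.of_nat n + 1) * B)).
  { apply sinh_ge0, Rmult_le_pos; [|lra]. apply IZR_le. lia. }
  eapply Rle_trans; [apply wronskian_trunc_le; auto|]. fold a.
  eapply Rle_trans.
  { apply Rmult_le_compat_l; [apply Rdiv_le_0_compat; nra | apply RInt_pow_mul_exp_le; lra]. }
  apply (Rmult_le_reg_r (2 ^ n * a ^ S n)); [nra|].
  replace (sinh (IZR (Z.of_nat n + 1) * B) / (2 ^ n * INR (fact n)) * (INR (fact n) / a ^ S n)
           * (2 ^ n * a ^ S n)) with (sinh (IZR (Z.of_nat n + 1) * B)) by (field; lra).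
  lra.
Qed.

Lemma x_besselI_besselK_le (n : nat) x : 0 < x ->
  x * besselI (Z.of_nat n) x * besselK (Z.of_nat n + 1) x <= 3.
Proof.
  intros Hx. set (P := x * besselI (Z.of_nat n) x). set (B0 := ln (2 * (INR n + 2))).
  assert (HP : 0 <= P) by (apply Rmult_le_pos; [lra | apply besselI_ge0; lra]).
  assert (Htrunc : forall B, 0 <= B -> P * besselK_trunc (Z.of_nat n + 1) B x <= 3).
  { intros B HB. set (B' := Rmax B B0).
    apply Rle_trans with (wronskian_trunc (Z.of_nat n) B' x).
    - apply Rle_trans with (P * besselK_trunc (Z.of_nat n + 1) B' x).
      + apply Rmult_le_compat_l; [lra|]. apply besselK_trunc_le_upper; [lra | apply Rmax_l].
      + unfold wronskian_trunc, P.
        assert (0 <= besselI (Z.of_nat n + 1) x * besselK_trunc (Z.of_nat n) B' x).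
        { apply Rmult_le_pos; [apply besselI_ge0; lra | apply besselK_trunc_ge0].
          apply Rle_trans with B; [lra | apply Rmax_l]. }
        nra.
    - apply wronskian_trunc_le_3; [apply Rmax_r | lra]. }
  destruct (Req_dec P 0) as [HP0|HP0]; fold P.
  - rewrite HP0, Rmult_0_l. lra.
  - assert (HK : besselK (Z.of_nat n + 1) x <= 3 / P).
    { apply besselK_le_of_trunc; auto. intros B HB.
      apply (Rmult_le_reg_l P); [lra|]. replace (P * (3 / P)) with 3 by (field; lra). auto. }
    apply (Rmult_le_compat_l P) in HK; [|lra].
    replace (P * (3 / P)) with 3 in HK by (field; lra). exact HK.
Qed.

Lemma besselK_besselI_le_abs n t s : 0 < t -> 0 < s ->
  besselK (n + 1) s * besselI n t
  <= besselK (Z.of_nat (Z.abs_nat n) + 1) s * besselI (Z.of_nat (Z.abs_nat n)) t.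
Proof.
  intros Ht Hs. rewrite Nat2Z.inj_abs_nat.
  replace (besselI n t) with (besselI (Z.abs n) t)
    by (destruct (Z.abs_spec n) as [[_ ->]|[_ ->]]; [|rewrite besselI_opp]; reflexivity).
  apply Rmult_le_compat_r; [apply besselI_ge0; lra|].
  apply besselK_le_order; auto. lia.
Qed.

(* [K_(k+1)(s) <= e^(u-s) K_(k+1)(u)], [I_k(t) <= I_k(u)] and [u I_k(u) K_(k+1)(u) <= 3]. *)
Lemma besselK_besselI_le_exp n t u s : 0 < t -> t <= u -> u <= s ->
  besselK (n + 1) s * besselI n t <= 3 * exp (u - s) / u.
Proof.
  intros Ht Htu Hus.
  eapply Rle_trans; [apply besselK_besselI_le_abs; lra|]. set (k := Z.of_nat (Z.abs_nat n)).
  assert (HI := besselI_increasing k t u ltac:(lra) Htu).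
  assert (HK := exp_mul_besselK_le (k + 1) u s ltac:(lra) Hus).
  assert (HW := x_besselI_besselK_le (Z.abs_nat n) u ltac:(lra)). fold k in HW.
  assert (HKs : 0 <= besselK (k + 1) s) by (apply besselK_ge0; lra).
  assert (HIt : 0 <= besselI k t) by (apply besselI_ge0; lra).
  assert (E : exp (u - s) * exp s = exp u) by (rewrite <- exp_plus; f_equal; ring).
  assert (Hes := exp_pos s). assert (Heus := exp_pos (u - s)).
  apply (Rmult_le_reg_l (u * exp s)); [nra|].
  replace (u * exp s * (3 * exp (u - s) / u)) with (3 * exp u) by (rewrite <- E; field; lra).
  apply Rle_trans with (exp u * (u * besselI k u * besselK (k + 1) u)).
  - assert (H : exp s * besselK (k + 1) s * besselI k t <= exp u * besselK (k + 1) u * besselI k u).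
    { apply Rmult_le_compat; [apply Rmult_le_pos | | |]; lra. }
    apply (Rmult_le_compat_l u) in H; [|lra]. lra.
  - rewrite (Rmult_comm 3). apply Rmult_le_compat_l; [left; apply exp_pos | exact HW].
Qed.

Lemma besselK_besselI_le_pow n t s : 0 < t -> t <= s ->
  besselK (n + 1) s * besselI n t <= 3 * (t / s) ^ Z.abs_nat n / s.
Proof.
  intros Ht Hts.
  eapply Rle_trans; [apply besselK_besselI_le_abs; lra|]. set (k := Z.abs_nat n).
  assert (HR := besselI_pow_ratio_le k t s Ht Hts).
  assert (HW := x_besselI_besselK_le k s ltac:(lra)).
  assert (HKs : 0 <= besselK (Z.of_nat k + 1) s) by (apply besselK_ge0; lra).
  assert (Hsk : 0 < s ^ k) by (apply pow_lt; lra).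
  assert (HI : besselI (Z.of_nat k) t <= besselI (Z.of_nat k) s * (t / s) ^ k).
  { unfold Rdiv. rewrite Rpow_mult_distr, pow_inv.
    apply (Rmult_le_reg_r (s ^ k)); auto.
    replace (besselI (Z.of_nat k) s * (t ^ k * / s ^ k) * s ^ k) with (besselI (Z.of_nat k) s * t ^ k)
      by (field; lra).
    auto. }
  assert (Htk : 0 <= (t / s) ^ k) by (apply pow_le, Rdiv_le_0_compat; lra).
  apply (Rmult_le_reg_l s); [lra|].
  replace (s * (3 * (t / s) ^ k / s)) with ((t / s) ^ k * 3) by (field; lra).
  apply Rle_trans with ((t / s) ^ k * (s * besselI (Z.of_nat k) s * besselK (Z.of_nat k + 1) s)).
  - replace ((t / s) ^ k * (s * besselI (Z.of_nat k) s * besselK (Z.of_nat k + 1) s))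
      with (s * (besselK (Z.of_nat k + 1) s * (besselI (Z.of_nat k) s * (t / s) ^ k))) by ring.
    apply Rmult_le_compat_l; [lra|]. apply Rmult_le_compat_l; auto.
  - apply Rmult_le_compat_l; lra.
Qed.

(** * The two integrals *)

Definition I1_integrand (n : Z) (s t : R) := besselK (n + 1) s * besselI n t * t.

Definition I2_integrand (n : Z) (t s : R) := besselK (n + 1) s * besselI n t * s.

Lemma ex_RInt_I1_integrand n s a b : ex_RInt (I1_integrand n s) a b.
Proof.
  apply ex_RInt_derivable. intros z. eexists.
  apply (is_derive_mult (fun t => besselK (n + 1) s * besselI n t) (fun t => t));
    [apply (is_derive_scal (besselI n)), besselI_derive | apply (is_derive_id (K:=R_AbsRing)) |].
  intros; apply Rmult_comm.
Qed.

Lemma ex_RInt_I2_integrand n t a b : 0 < a -> a <= b -> ex_RInt (I2_integrand n t) a b.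
Proof.
  intros Ha Hab. apply (ex_RInt_continuous (V:=R_CompleteNormedModule)).
  intros z Hz. rewrite Rmin_left, Rmax_right in Hz by lra.
  apply continuity_pt_filterlim. unfold I2_integrand.
  apply continuity_pt_mult; [apply continuity_pt_mult | apply continuity_pt_id].
  - apply besselK_continuous; lra.
  - apply continuity_pt_const. intros ??; reflexivity.
Qed.

Lemma RInt_I1_integrand_le_3 n s : 0 < s -> RInt (I1_integrand n s) 0 s <= 3.
Proof.
  intros Hs. apply Rle_trans with (RInt (fun t => 3 * exp (t - s)) 0 s).
  - apply RInt_le; [lra | apply ex_RInt_I1_integrand | apply ex_RInt_derivable; intros; auto_derive; auto |].
    intros t Ht. unfold I1_integrand.
    assert (H := besselK_besselI_le_exp n t t s ltac:(lra) ltac:(lra) ltac:(lra)).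
    apply (Rmult_le_compat_r t) in H; [|lra].
    replace (3 * exp (t - s) / t * t) with (3 * exp (t - s)) in H by (field; lra). exact H.
  - rewrite (RInt_antiderivative _ (fun t => 3 * exp (t - s))); [| lra | |].
    + rewrite Rminus_diag, exp_0. assert (0 < exp (0 - s)) by apply exp_pos. lra.
    + intros x _. auto_derive; auto. R_eq. rewrite Rmult_1_l. reflexivity.
    + intros x _. auto_derive. auto.
Qed.

Lemma RInt_I1_integrand_le_div n s : 0 < s ->
  RInt (I1_integrand n s) 0 s <= 3 * s / (INR (Z.abs_nat n) + 2).
Proof.
  intros Hs. set (k := Z.abs_nat n). assert (Hk := pos_INR k).
  assert (Hsk : 0 < s ^ S k) by (apply pow_lt; lra).
  apply Rle_trans with (RInt (fun t => 3 / s ^ S k * t ^ S k) 0 s).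
  - apply RInt_le; [lra | apply ex_RInt_I1_integrand | apply ex_RInt_derivable; intros; auto_derive; auto |].
    intros t Ht. unfold I1_integrand.
    assert (H := besselK_besselI_le_pow n t s ltac:(lra) ltac:(lra)). fold k in H.
    apply (Rmult_le_compat_r t) in H; [|lra].
    eapply Rle_trans; [exact H|]. right.
    unfold Rdiv. rewrite Rpow_mult_distr, pow_inv. cbn [pow]. field. split; [apply pow_nonzero|]; lra.
  - rewrite (RInt_antiderivative _ (fun t => 3 / s ^ S k * (t ^ S (S k) / (INR k + 2)))); [| lra | |].
    + right. cbn [pow]. field. repeat split; try apply pow_nonzero; lra.
    + intros x _. auto_derive; auto. R_eq.
      change (match k with O => 1 | S _ => INR k + 1 end) with (INR (S k)). rewrite S_INR.
      cbn [pow]. field. repeat split; try apply pow_nonzero; lra.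
    + intros x _. auto_derive. auto.
Qed.

Lemma RInt_I2_integrand_tail_le_6 n t a b : 0 < t -> t <= a -> 1 <= a -> a <= b ->
  RInt (I2_integrand n t) a b <= 6.
Proof.
  intros Ht Hta Ha Hab. set (c := 3 * exp a / a).
  assert (Hc : 0 < c) by (apply Rdiv_lt_0_compat; [assert (H := exp_pos a) |]; lra).
  apply Rle_trans with (RInt (fun s => c * (s * exp (- s))) a b).
  - apply RInt_le; [lra | apply ex_RInt_I2_integrand; lra | |].
    + apply ex_RInt_derivable. intros; auto_derive; auto.
    + intros s Hs. unfold I2_integrand.
      assert (H := besselK_besselI_le_exp n t a s Ht Hta ltac:(lra)).
      apply (Rmult_le_compat_r s) in H; [|lra].
      eapply Rle_trans; [exact H|]. right. unfold c, Rminus. rewrite exp_plus. field. lra.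
  - rewrite RInt_scal_R by (apply ex_RInt_derivable; intros; auto_derive; auto).
    apply Rle_trans with (c * ((a + 1) * exp (- a))).
    + apply Rmult_le_compat_l; [lra | apply RInt_mul_exp_neg_le; lra].
    + unfold c. rewrite exp_Ropp.
      replace (3 * exp a / a * ((a + 1) * / exp a)) with (3 * (a + 1) / a)
        by (field; split; [assert (H := exp_pos a) |]; lra).
      apply (Rmult_le_reg_r a); [lra|]. replace (3 * (a + 1) / a * a) with (3 * (a + 1)) by (field; lra).
      lra.
Qed.

Lemma RInt_I2_integrand_le_9 n t M : 0 < t <= M -> 1 <= M -> RInt (I2_integrand n t) t M <= 9.
Proof.
  intros [Ht HtM] HM.
  destruct (Rle_dec 1 t) as [Ht1|Ht1].
  - assert (H := RInt_I2_integrand_tail_le_6 n t t M Ht (Rle_refl t) Ht1 HtM). lra.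
  - rewrite <- (RInt_Chasles (V:=R_CompleteNormedModule) (I2_integrand n t) t 1 M)
      by (apply ex_RInt_I2_integrand; lra).
    assert (H1 : RInt (I2_integrand n t) t 1 <= 3).
    { apply Rle_trans with (RInt (fun _ => 3) t 1).
      - apply RInt_le; [lra | apply ex_RInt_I2_integrand; lra | apply ex_RInt_const |].
        intros s Hs. unfold I2_integrand.
        assert (H := besselK_besselI_le_pow n t s ltac:(lra) ltac:(lra)).
        apply (Rmult_le_compat_r s) in H; [|lra].
        replace (3 * (t / s) ^ Z.abs_nat n / s * s) with (3 * (t / s) ^ Z.abs_nat n) in H by (field; lra).
        assert (Hts : 0 <= t / s <= 1).
        { split; [apply Rdiv_le_0_compat; lra|].
          apply (Rmult_le_reg_r s); [lra|]. replace (t / s * s) with t by (field; lra). lra. }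
        assert (H3 := pow_incr (t / s) 1 (Z.abs_nat n) Hts). rewrite pow1 in H3. lra.
      - rewrite RInt_const. unfold scal; simpl; unfold mult; simpl. lra. }
    assert (H2 := RInt_I2_integrand_tail_le_6 n t 1 M Ht ltac:(lra) (Rle_refl 1) HM).
    unfold plus; simpl. lra.
Qed.

Lemma RInt_I2_integrand_le_div n t M : 0 < t <= M -> (2 <= Z.abs_nat n)%nat ->
  RInt (I2_integrand n t) t M <= 3 * M / (INR (Z.abs_nat n) - 1).
Proof.
  intros [Ht HtM] Hk. destruct (Z.abs_nat n) as [|[|j]] eqn:Ek; [lia | lia |].
  assert (HJ : 0 < INR (S j)) by (apply lt_0_INR; lia).
  replace (INR (S (S j)) - 1) with (INR (S j)) by (rewrite (S_INR (S j)); ring).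
  assert (Hpos : forall z, 0 < z -> 0 < z ^ j) by (intros; apply pow_lt; lra).
  apply Rle_trans with (RInt (fun s => 3 * t ^ S (S j) / s ^ S (S j)) t M).
  - apply RInt_le; [lra | apply ex_RInt_I2_integrand; lra | |].
    + apply (ex_RInt_continuous (V:=R_CompleteNormedModule)). intros z Hz.
      rewrite Rmin_left, Rmax_right in Hz by lra. specialize (Hpos z ltac:(lra)).
      apply (ex_derive_continuous (V:=R_NormedModule)). auto_derive. apply Rgt_not_eq. repeat apply Rmult_lt_0_compat; lra.
    + intros s Hs. unfold I2_integrand.
      assert (H := besselK_besselI_le_pow n t s ltac:(lra) ltac:(lra)). rewrite Ek in H.
      apply (Rmult_le_compat_r s) in H; [|lra].
      eapply Rle_trans; [exact H|]. right.
      unfold Rdiv. rewrite Rpow_mult_distr, pow_inv. field. split; [apply pow_nonzero|]; lra.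
  - assert (0 < t ^ S j) by (apply pow_lt; lra). assert (0 < M ^ S j) by (apply pow_lt; lra).
    rewrite (RInt_antiderivative _ (fun s => - 3 * t ^ S (S j) / (INR (S j) * s ^ S j))); [| lra | |].
    + replace (- 3 * t ^ S (S j) / (INR (S j) * t ^ S j)) with (- (3 * t / INR (S j)))
        by (cbn [pow]; field; repeat split; try apply pow_nonzero; lra).
      assert (0 <= 3 * t ^ S (S j) / (INR (S j) * M ^ S j))
        by (apply Rdiv_le_0_compat; [cbn [pow] in *; nra | nra]).
      assert (3 * t / INR (S j) <= 3 * M / INR (S j))
        by (apply Rmult_le_compat_r; [left; apply Rinv_0_lt_compat |]; lra).
      unfold Rdiv in *. lra.
    + intros x Hx. specialize (Hpos x ltac:(lra)). auto_derive.
      * change (match j with O => 1 | S _ => INR j + 1 end) with (INR (S j)).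
        apply Rgt_not_eq. repeat apply Rmult_lt_0_compat; lra.
      * R_eq. change (match j with O => 1 | S _ => INR j + 1 end) with (INR (S j)).
        cbn [pow]. field. repeat split; try apply pow_nonzero; lra.
    + intros x Hx. specialize (Hpos x ltac:(lra)). auto_derive. apply Rgt_not_eq. repeat apply Rmult_lt_0_compat; lra.
Qed.

Lemma RInt_I1_integrand_bounds n s M : 0 < s <= M ->
  RInt (I1_integrand n s) 0 s <= 9 /\
  RInt (I1_integrand n s) 0 s * (INR (Z.abs_nat n) + 1) <= 18 * M.
Proof.
  intros [Hs HsM]. assert (Hk := pos_INR (Z.abs_nat n)).
  assert (H3 := RInt_I1_integrand_le_3 n s Hs).
  assert (Hdiv := RInt_I1_integrand_le_div n s Hs).
  split; [lra|].
  apply (Rmult_le_compat_r (INR (Z.abs_nat n) + 1)) in Hdiv; [|lra].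
  eapply Rle_trans; [exact Hdiv|].
  apply (Rmult_le_reg_r (INR (Z.abs_nat n) + 2)); [lra|].
  replace (3 * s / (INR (Z.abs_nat n) + 2) * (INR (Z.abs_nat n) + 1) * (INR (Z.abs_nat n) + 2))
    with (3 * s * (INR (Z.abs_nat n) + 1)) by (field; lra).
  nra.
Qed.

Lemma RInt_I2_integrand_bounds n t M : 0 < t <= M -> 1 <= M ->
  RInt (I2_integrand n t) t M <= 9 /\
  RInt (I2_integrand n t) t M * (INR (Z.abs_nat n) + 1) <= 18 * M.
Proof.
  intros Ht HM. set (k := Z.abs_nat n). assert (Hk := pos_INR k).
  assert (H9 := RInt_I2_integrand_le_9 n t M Ht HM).
  split; [lra|].
  destruct (le_lt_dec 2 k) as [Hk2|Hk2].
  - assert (Hdiv := RInt_I2_integrand_le_div n t M Ht Hk2). fold k in Hdiv.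
    assert (HK2 : 2 <= INR k) by (replace 2 with (INR 2) by (simpl; ring); apply le_INR; auto).
    apply (Rmult_le_compat_r (INR k + 1)) in Hdiv; [|lra].
    eapply Rle_trans; [exact Hdiv|].
    apply (Rmult_le_reg_r (INR k - 1)); [lra|].
    replace (3 * M / (INR k - 1) * (INR k + 1) * (INR k - 1)) with (3 * M * (INR k + 1)) by (field; lra).
    nra.
  - assert (HK1 : INR k <= 1) by (replace 1 with (INR 1) by (simpl; ring); apply le_INR; lia).
    nra.
Qed.

Theorem lemma3p4 :
  exists C : R,
    forall m n : Z, m <> 0%Z ->
      (forall s : R, 0 < s <= Rabs (IZR m) ->
         / Rabs (IZR m) *
           RInt (fun t => besselK (n + 1) s * besselI n t * t) 0 s
         <= C / sqrt (1 + IZR m ^ 2 + IZR n ^ 2)) /\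
      (forall t : R, 0 < t <= Rabs (IZR m) ->
         / Rabs (IZR m) *
           RInt (fun s => besselK (n + 1) s * besselI n t * s) t (Rabs (IZR m))
         <= C / sqrt (1 + IZR m ^ 2 + IZR n ^ 2)).
Proof.
  exists 21. intros m n Hm. rewrite IZR_sq_eq_Rabs_INR.
  assert (HM : 1 <= Rabs (IZR m)) by (rewrite <- abs_IZR; apply IZR_le; lia).
  assert (Hk := pos_INR (Z.abs_nat n)).
  split; intros x Hx.
  - destruct (RInt_I1_integrand_bounds n x (Rabs (IZR m)) Hx) as [H9 H18].
    apply div_le_div_sqrt; [exact HM | exact Hk | exact H9 | exact H18].
  - destruct (RInt_I2_integrand_bounds n x (Rabs (IZR m)) Hx HM) as [H9 H18].
    apply div_le_div_sqrt; [exact HM | exact Hk | exact H9 | exact H18].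
Qed.
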